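(* Let $q$ be a prime power. Let $C_1=[n,k_1,d_1]_q$, $C_2=[n,k_2,d_2]_q$ be linear codes over $\mathbb{F}_q$ with $C_2\subset C_1$ (giving via CSS an asymmetric stabilizer code $[[n,k^{*},d_z^{*}/d_x^{*}]]_q$, $k^{*}=k_1-k_2$, $d_z^{*}\geq d_1$, $d_x^{*}\geq d_2^{\perp}$), and let $C_3=[n,k_3,d_3]_q$, $C_4=[n,k_4,d_4]_q$ be linear codes over $\mathbb{F}_q$ with $C_4\subset C_3$ (giving an asymmetric stabilizer code $[[n,k^{\diamond},d_z^{\diamond}/d_x^{\diamond}]]_q$, $k^{\diamond}=k_3-k_4$, $d_z^{\diamond}\geq d_3$, $d_x^{\diamond}\geq d_4^{\perp}$), where $d_2^{\perp}$ and $d_4^{\perp}$ are the minimum distances of the Euclidean duals $C_2^{\perp}$ and $C_4^{\perp}$. Then there exists an AQECC $[[2n,k^{*}+k^{\diamond},d_z/d_x]]_q$ with $d_z\geq\min\{2d_1,d_3\}$ and $d_x\geq\min\{2d_4^{\perp},d_2^{\perp}\}$.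
   Context: An AQECC $[[n,k,d_z/d_x]]_q$ is a $q^k$-dimensional subspace of $\mathbb{C}^{q^n}$ correcting all qudit-flip errors up to $\lfloor (d_x-1)/2\rfloor$ and all phase-shift errors up to $\lfloor (d_z-1)/2\rfloor$. CSS construction: if $C_2\subset C_1\subseteq\mathbb{F}_q^n$ are linear of dimensions $k_2<k_1$, there is an AQECC $[[n,k_1-k_2,d_z/d_x]]_q$ with $d_z=\mathrm{wt}(C_1\setminus C_2)$, $d_x=\mathrm{wt}(C_2^{\perp}\setminus C_1^{\perp})$. *)

From HB Require Import structures.
From mathcomp Require Import all_boot all_order all_algebra all_field.
Set Implicit Arguments. Unset Strict Implicit. Unset Printing Implicit Defensive.
Import Order.TTheory GRing.Theory Num.Theory.
Local Open Scope ring_scope.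

Section ClassicalCodes.
Variable F : finFieldType.

Definition wt (n : nat) (v : 'rV[F]_n) : nat := #|[set i : 'I_n | v 0 i != 0]|.

(* minimum weight of the nonzero words of a set of words (n.+1 if there are none) *)
Definition min_wt (n : nat) (P : pred 'rV[F]_n) : nat :=
  \big[minn/n.+1]_(c : 'rV[F]_n | P c && (c != 0)) wt c.

Definition mindist (n : nat) (C : {vspace 'rV[F]_n}) : nat :=
  min_wt (fun c => c \in C).

Definition dual_code (n : nat) (C : {vspace 'rV[F]_n}) : pred 'rV[F]_n :=
  fun u => [forall c : 'rV[F]_n, (c \in C) ==> (u *m c^T == 0)].

Definition dual_mindist (n : nat) (C : {vspace 'rV[F]_n}) : nat :=
  min_wt (dual_code C).

End ClassicalCodes.

Section QuantumCodes.
Variable F : finFieldType.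

(* a nontrivial additive character of F (e.g. x |-> omega^(tr x)) *)
Definition nontriv_add_char (chi : F -> algC) : Prop :=
  chi 0 = 1 /\ (forall x y, chi (x + y) = chi x * chi y) /\ exists x, chi x != 1.

(* the Hilbert space C^{q^m}: functions on the computational basis F^m *)
Definition qstate (m : nat) := {ffun 'rV[F]_m -> algC^o}.

Definition qinner (m : nat) (u v : qstate m) : algC :=
  \sum_(x : 'rV[F]_m) (u x)^* * v x.

(* the error operator X(a) Z(b):  Z(b)|x> = chi(b.x)|x>,  X(a)|x> = |x+a> *)
Definition pauliXZ (chi : F -> algC) (m : nat) (a b : 'rV[F]_m) (u : qstate m)
  : qstate m :=
  [ffun x : 'rV[F]_m => chi ((b *m (x - a)^T) 0 0) * u (x - a)].

(* Q corrects every error X(a)Z(b) with wt a <= tx (qudit flips) and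
   wt b <= tz (phase shifts): Knill-Laflamme conditions *)
Definition corrects (chi : F -> algC) (m tz tx : nat) (Q : {vspace qstate m}) :=
  forall a1 b1 a2 b2 : 'rV[F]_m,
    (wt a1 <= tx)%N -> (wt b1 <= tz)%N -> (wt a2 <= tx)%N -> (wt b2 <= tz)%N ->
    exists c : algC, forall u v, u \in Q -> v \in Q ->
      qinner (pauliXZ chi a1 b1 u) (pauliXZ chi a2 b2 v) = c * qinner u v.

Definition is_AQECC (chi : F -> algC) (m K dz dx : nat) (Q : {vspace qstate m}) :=
  \dim Q = (#|F| ^ K)%N /\ corrects chi (dz.-1)./2 (dx.-1)./2 Q.

End QuantumCodes.

From HB Require Import structures.
From mathcomp Require Import all_boot all_order all_algebra all_field.
From mathcomp Require Import ring zify.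
Set Implicit Arguments. Unset Strict Implicit. Unset Printing Implicit Defensive.
Import Order.TTheory GRing.Theory Num.Theory.
Local Open Scope ring_scope.

(* The (u | u + v) construction turns the nested pairs C2 <= C1 and C4 <= C3
   into the nested pair G2 = {(u | u + v) : u in C2, v in C4} <= G1 =
   {(u | u + v) : u in C1, v in C3} of codes of length 2n, with
   dim G1 - dim G2 = (dim C1 - dim C2) + (dim C3 - dim C4).  A nonzero word
   (u | u + v) has weight at least 2 wt u if v = 0 and at least wt v
   otherwise, so the nonzero words of G1 weigh at least min(2 d1, d3).
   Dually, (s | t) is orthogonal to G2 iff t is in C4^perp and s + t in
   C2^perp, so the nonzero words of G2^perp weigh at least
   min(2 d4^perp, d2^perp).  The CSS code of G2 <= G1 is spanned by the states
   x |-> [x in G2^perp] chi(x.c), c ranging over a complement of G2 in G1; by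
   the orthogonality relations of chi, the Knill-Laflamme conditions for it
   reduce to these two weight bounds. *)

Section Duality.
Variables (F : finFieldType) (m : nat).
Implicit Types (x y z c w : 'rV[F]_m) (S : {pred 'rV[F]_m}).

Definition dot x y : F := (x *m y^T) 0 0.

Lemma dotC x y : dot x y = dot y x.
Proof. by rewrite /dot -[x *m _]trmxK trmx_mul trmxK mxE. Qed.

Lemma dotDl x y z : dot (x + y) z = dot x z + dot y z.
Proof. by rewrite /dot mulmxDl mxE. Qed.

Lemma dotZl k x z : dot (k *: x) z = k * dot x z.
Proof. by rewrite /dot -scalemxAl mxE. Qed.

Lemma dotNl x z : dot (- x) z = - dot x z.
Proof. by rewrite -scaleN1r dotZl mulN1r. Qed.

Lemma dotBl x y z : dot (x - y) z = dot x z - dot y z.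
Proof. by rewrite dotDl dotNl. Qed.

Lemma dot0l z : dot 0 z = 0.
Proof. by rewrite -(scale0r 0) dotZl mul0r. Qed.

Lemma dotDr x y z : dot z (x + y) = dot z x + dot z y.
Proof. by rewrite !(dotC z) dotDl. Qed.

Lemma dotZr k x z : dot z (k *: x) = k * dot z x.
Proof. by rewrite !(dotC z) dotZl. Qed.

Lemma dotBr x y z : dot z (x - y) = dot z x - dot z y.
Proof. by rewrite !(dotC z) dotBl. Qed.

Lemma dot0r z : dot z 0 = 0.
Proof. by rewrite dotC dot0l. Qed.

Definition perp S : {pred 'rV[F]_m} :=
  [pred w | [forall c, (c \in S) ==> (dot w c == 0)]].

Lemma perpP S w : reflect (forall c, c \in S -> dot w c = 0) (w \in perp S).
Proof.
apply: (iffP forallP) => [wS c cS | wS c]; first by apply/eqP; move: (wS c); rewrite cS.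
by apply/implyP => /wS ->.
Qed.

Lemma perp_submod_closed S : submod_closed (perp S).
Proof.
split; first by apply/perpP => c _; rewrite dot0l.
move=> k x y /perpP xS /perpP yS; apply/perpP => c cS.
by rewrite dotDl dotZl xS ?yS ?mulr0 ?addr0.
Qed.

HB.instance Definition _ S :=
  GRing.isSubmodClosed.Build F 'rV[F]_m (perp S) (perp_submod_closed S).

Lemma perpT_eq0 w : w \in perp [pred _ | true] -> w = 0.
Proof.
move/perpP => wT; apply/rowP => j; have := wT (delta_mx 0 j) isT.
by rewrite /dot trmx_delta -colE mxE => ->; rewrite mxE.
Qed.

Lemma mx11_eq0 (M : 'M[F]_1) : (M == 0) = (M 0 0 == 0).
Proof.
by apply/eqP/eqP => [->|M0]; [rewrite mxE | apply/rowP => j; rewrite ord1 M0 mxE].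
Qed.

Lemma dual_codeE (V : {vspace 'rV[F]_m}) u : dual_code V u = (u \in perp V).
Proof. by rewrite inE; apply: eq_forallb => c; rewrite mx11_eq0. Qed.

End Duality.

Section AdditiveCharacter.
Variables (F : finFieldType) (chi : F -> algC).
Hypothesis chiP : nontriv_add_char chi.

Lemma char0 : chi 0 = 1.
Proof. by case: chiP. Qed.

Lemma charD x y : chi (x + y) = chi x * chi y.
Proof. by case: chiP => _ []. Qed.

Lemma charMn x k : chi (x *+ k) = chi x ^+ k.
Proof. by elim: k => [|k IHk]; rewrite ?mulr0n ?char0 // mulrS charD IHk exprS. Qed.

Lemma charN x : chi (- x) = (chi x)^-1.
Proof. by apply/esym/mulr1_eq; rewrite -charD subrr char0. Qed.

(* chi x is a p-th root of unity, p the characteristic of F. *)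
Lemma conj_char x : (chi x)^* = chi (- x).
Proof.
have [p p_pr pchar_p] := finPcharP F.
have chi_p : chi x ^+ p = 1 by rewrite -charMn (mulrn_pchar pchar_p) char0.
have norm_chi : `|chi x| = 1.
  apply/eqP; rewrite -(pexpr_eq1 (prime_gt0 p_pr)) ?normr_ge0 //.
  by rewrite -normrX chi_p normr1.
by rewrite charN invC_norm norm_chi expr1n invr1 mul1r.
Qed.

Section Orthogonality.
Variable m : nat.
Implicit Types (S : {pred 'rV[F]_m}) (w : 'rV[F]_m).

(* If w is not orthogonal to S, some y1 in S has chi (dot w y1) != 1, and
   translation by y1 multiplies the sum by that value. *)
Lemma sum_char_dot S w : submod_closed S ->
  \sum_(y in S) chi (dot w y) = if w \in perp S then (#|S|%:R : algC) else 0.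
Proof.
move=> closedS; have [[_ SD] SZ] := GRing.submod_closed_semi closedS.
have [_ SB] := GRing.submod_closedB closedS.
case: ifP => [/perpP wS | /perpP wS].
  by rewrite (eq_bigr (fun _ => 1)) ?sumr_const // => y yS; rewrite wS ?char0.
have [c0 c0S wc0] : exists2 c0, c0 \in S & dot w c0 != 0.
  apply/exists_inP; apply: contraFT (introF (perpP _ _) wS) => /exists_inPn wS'.
  by apply/perpP => c /wS' /negPn /eqP.
have [x0 chi_x0] : exists x0, chi x0 != 1 by case: chiP => _ [].
pose y1 := (x0 / dot w c0) *: c0.
have wy1 : dot w y1 = x0 by rewrite dotZr mulfVK.
set s := (X in X = _).
have s_fix : s = chi x0 * s.
  rewrite {1}/s (reindex_inj (addIr y1)) /= mulr_sumr.
  apply: eq_big => [y|y _]; last by rewrite dotDr charD wy1 mulrC.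
  apply/idP/idP => [yS|]; first by rewrite -(addrK y1 y) SB ?SZ.
  by move/SD; apply; apply: SZ.
apply/eqP; have : (1 - chi x0) * s == 0 by rewrite mulrBl mul1r -s_fix subrr.
by rewrite mulf_eq0 subr_eq0 eq_sym (negbTE chi_x0).
Qed.

(* Both sides count the double sum of chi (dot u c) over u and c in S. *)
Lemma card_perp S : submod_closed S -> (#|S| * #|perp S|)%N = (#|F| ^ m)%N.
Proof.
move=> closedS; set sum2 := \sum_u \sum_(c in S) chi (dot u c).
have sum2_perp : sum2 = (#|S| * #|perp S|)%:R.
  rewrite /sum2 (eq_bigr _ (fun u _ => sum_char_dot u closedS)) -big_mkcond.
  by rewrite sumr_const natrM mulr_natr.
have sum2_all : sum2 = (#|F| ^ m)%:R.
  rewrite /sum2 exchange_big (bigD1 0 closedS.1) /= [X in _ + X]big1 ?addr0.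
    rewrite (eq_bigr (fun _ => 1)) => [|u _]; last by rewrite dot0r char0.
    by rewrite sumr_const card_mx mul1n.
  move=> c /andP[_ c0].
  transitivity (\sum_(u in [pred _ : 'rV[F]_m | true]) chi (dot c u)).
    by apply: eq_big => // u _; rewrite dotC.
  rewrite sum_char_dot //; case: ifP => // /perpT_eq0 c_0.
  by rewrite c_0 eqxx in c0.
by apply/eqP; rewrite -(eqr_nat algC) -sum2_perp sum2_all.
Qed.

Lemma perpK S : submod_closed S -> perp (perp S) =i S.
Proof.
move=> closedS; have S_perpK : S \subset perp (perp S).
  by apply/subsetP => c cS; apply/perpP => w /perpP wS; rewrite dotC wS.
have perp_gt0 : (0 < #|perp S|)%N by apply/card_gt0P; exists 0; rewrite rpred0.
have cardK : #|S| = #|perp (perp S)|.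
  apply/eqP; rewrite -(eqn_pmul2l perp_gt0) card_perp; last exact: perp_submod_closed.
  by rewrite mulnC card_perp.
by move: S_perpK => /(subset_cardP cardK) SK c; rewrite SK.
Qed.

Lemma perpKv (V : {vspace 'rV[F]_m}) : perp (perp V) =i V.
Proof. exact/perpK/memv_submod_closed. Qed.

End Orthogonality.
End AdditiveCharacter.

Section Weight.
Variable F : finFieldType.
Implicit Types m : nat.

Lemma wt_eq0 m (x : 'rV[F]_m) : (wt x == 0)%N = (x == 0).
Proof.
rewrite /wt cards_eq0; apply/eqP/eqP => [x0|->]; last first.
  by apply/setP => i; rewrite !inE mxE eqxx.
apply/rowP => i; rewrite mxE; apply/eqP; apply: contraT => xi.
by have := in_set0 i; rewrite -x0 inE xi.
Qed.

Lemma wtN m (x : 'rV[F]_m) : wt (- x) = wt x.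
Proof. by apply: eq_card => i; rewrite !inE mxE oppr_eq0. Qed.

Lemma leq_wtD m (x y : 'rV[F]_m) : (wt (x + y) <= wt x + wt y)%N.
Proof.
apply: leq_trans (leq_card_setU _ _); apply/subset_leq_card/subsetP => i.
by rewrite !inE mxE; apply: contraR => /norP[/negPn/eqP-> /negPn/eqP->]; rewrite addr0.
Qed.

Lemma wt_row_mx m1 m2 (x : 'rV[F]_m1) (y : 'rV[F]_m2) :
  wt (row_mx x y) = (wt x + wt y)%N.
Proof.
rewrite /wt -!sum1_card big_split_ord /=.
by congr (_ + _)%N; apply: eq_bigl => i; rewrite !inE ?row_mxEl ?row_mxEr.
Qed.

Lemma min_wt_le m (P : pred 'rV[F]_m) c : P c -> c != 0 -> (min_wt P <= wt c)%N.
Proof.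
by move=> Pc c0; rewrite /min_wt -minEnat; apply: (@bigmin_le_cond _ nat); rewrite Pc.
Qed.

Lemma leq_wtB_half m d (x y : 'rV[F]_m) :
  (wt x <= (d.-1)./2)%N -> (wt y <= (d.-1)./2)%N -> (wt (x - y) <= d.-1)%N.
Proof. by move=> wx wy; apply: leq_trans (leq_wtD _ _) _; rewrite wtN; lia. Qed.

Lemma wt_bounded_eq0 m d (x : 'rV[F]_m) : (d <= wt x)%N -> (wt x <= d.-1)%N -> x = 0.
Proof. by move=> dx xd; apply/eqP; rewrite -wt_eq0; apply/eqP; lia. Qed.

End Weight.

Section StateSpace.
Variables (F : finFieldType) (m : nat).
Implicit Types (u v : qstate F m).

Lemma qinner_suml n (k : 'I_n -> algC) (f : 'I_n -> qstate F m) v :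
  qinner (\sum_i k i *: f i) v = \sum_i (k i)^* * qinner (f i) v.
Proof.
rewrite /qinner; under eq_bigr => x _ do rewrite sum_ffunE rmorph_sum mulr_suml.
rewrite exchange_big /=; apply: eq_bigr => i _; rewrite mulr_sumr.
by apply: eq_bigr => x _; rewrite ffunE rmorphM mulrA.
Qed.

Lemma qinner_sumr n (k : 'I_n -> algC) (f : 'I_n -> qstate F m) u :
  qinner u (\sum_i k i *: f i) = \sum_i k i * qinner u (f i).
Proof.
rewrite /qinner; under eq_bigr => x _ do rewrite sum_ffunE mulr_sumr.
rewrite exchange_big /=; apply: eq_bigr => i _; rewrite mulr_sumr.
by apply: eq_bigr => x _; rewrite ffunE mulrCA.
Qed.

Lemma orthogonal_free (s : seq (qstate F m)) (r : algC) : r != 0 ->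
    (forall i j, (i < size s)%N -> (j < size s)%N ->
       qinner s`_i s`_j = (i == j)%:R * r) ->
  free s.
Proof.
move=> r0 s_orth; apply/(@freeP _ _ (size s) (in_tuple s)) => k sum0 i.
have := congr1 (qinner s`_i) sum0; rewrite qinner_sumr (bigD1 i) //= big1.
  rewrite s_orth // eqxx mul1r addr0 /qinner big1 => [/eqP|x _]; last first.
    by rewrite ffunE mulr0.
  by rewrite mulf_eq0 (negbTE r0) orbF => /eqP.
by move=> j ji; rewrite s_orth // eq_sym (negbTE (ji : j != i :> nat)) mul0r mulr0.
Qed.

Lemma qinner_span (s : seq (qstate F m)) (E1 E2 : {linear qstate F m -> qstate F m}) k :
    (forall i j, (i < size s)%N -> (j < size s)%N ->
       qinner (E1 s`_i) (E2 s`_j) = k * qinner s`_i s`_j) ->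
  {in <<s>>%VS &, forall u v, qinner (E1 u) (E2 v) = k * qinner u v}.
Proof.
move=> E_s u v uS vS; pose crd w i := coord (in_tuple s) i w.
have span_crd w : w \in <<s>>%VS -> w = \sum_i crd w i *: s`_i.
  exact: coord_span (in_tuple s) w.
have E_span (E : {linear qstate F m -> qstate F m}) w : w \in <<s>>%VS ->
    E w = \sum_i crd w i *: E s`_i.
  by move/span_crd=> {1}->; rewrite linear_sum; apply: eq_bigr => i _; rewrite linearZ.
rewrite (E_span E1) // (E_span E2) // [u in RHS]span_crd // [v in RHS]span_crd //.
rewrite !qinner_suml mulr_sumr; apply: eq_bigr => i _.
rewrite !qinner_sumr [RHS]mulrCA; congr (_ * _); rewrite mulr_sumr.
by apply: eq_bigr => j _; rewrite E_s // mulrCA.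
Qed.

End StateSpace.

Section CSSConstruction.
Variables (F : finFieldType) (chi : F -> algC).
Hypothesis chiP : nontriv_add_char chi.
Variables (m : nat) (G1 G2 : {vspace 'rV[F]_m}).

Fact pauliXZ_is_linear (a b : 'rV[F]_m) : linear (pauliXZ chi a b).
Proof. by move=> k u v; apply/ffunP => x; rewrite !ffunE mulrDr mulrCA. Qed.

HB.instance Definition _ (a b : 'rV[F]_m) :=
  GRing.isLinear.Build algC (qstate F m) (qstate F m) _ (pauliXZ chi a b)
    (pauliXZ_is_linear a b).

Lemma pauliXZ0 (u : qstate F m) : pauliXZ chi 0 0 u = u.
Proof. by apply/ffunP => x; rewrite ffunE subr0 -/(dot 0 x) dot0l char0 ?mul1r. Qed.

Definition css_state (c : 'rV[F]_m) : qstate F m :=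
  [ffun x => if x \in perp G2 then chi (dot x c) else 0].

(* Substituting x = y + a1, the inner product becomes a character sum over
   G2^perp, which vanishes unless a2 - a1 lies in G2^perp. *)
Lemma qinner_pauliXZ_css a1 b1 a2 b2 c c' :
  qinner (pauliXZ chi a1 b1 (css_state c)) (pauliXZ chi a2 b2 (css_state c')) =
  if a2 - a1 \in perp G2 then
    chi (- dot (a2 - a1) (b2 + c')) *
      (if b2 - b1 + (c' - c) \in G2 then #|perp G2|%:R else 0)
  else 0.
Proof.
rewrite /qinner (reindex_inj (addIr a1)) /=; set a := a2 - a1.
have shift y : y + a1 - a2 = y - a by rewrite /a opprB addrA addrAC.
case: ifP => Da.
  rewrite -(perpKv chiP G2 (b2 - b1 + _)).
  rewrite -(sum_char_dot chiP _ (perp_submod_closed _)) mulr_sumr.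
  rewrite [RHS]big_mkcond /=; apply: eq_bigr => y _; rewrite !ffunE addrK shift.
  have -> : (y - a \in perp G2) = (y \in perp G2).
    by apply/idP/idP => Dy; [rewrite -(subrK a y) rpredD | rewrite rpredB].
  case: ifP => _; last by rewrite !mulr0.
  rewrite !rmorphM /= !conj_char // -!charD //; congr chi.
  rewrite -!/(dot _ _) !(dotBr, dotDr, dotBl, dotDl, dotNl).
  by rewrite (dotC y c) (dotC y c') (dotC b2 a2) (dotC b2 a1); ring.
rewrite big1 // => y _; rewrite !ffunE addrK shift.
case: ifP => Dy; last by rewrite mulr0 conjC0 mul0r.
case: ifP => Dya; last by rewrite !mulr0.
by have := rpredB Dy Dya; rewrite opprB addrCA subrr addr0 Da.
Qed.

Lemma qinner_css_state c c' :
  qinner (css_state c) (css_state c') =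
  if c' - c \in G2 then #|perp G2|%:R else 0.
Proof.
have := qinner_pauliXZ_css 0 0 0 0 c c'; rewrite !pauliXZ0 => ->.
by rewrite subr0 rpred0 dot0l oppr0 char0 // mul1r add0r.
Qed.

Hypothesis G21 : (G2 <= G1)%VS.

Lemma css_complement_diff c c' : c \in (G1 :\: G2)%VS -> c' \in (G1 :\: G2)%VS ->
  (c' - c \in G2) = (c == c').
Proof.
move=> cL c'L; apply/idP/eqP => [c'cG2 | ->]; last by rewrite subrr mem0v.
apply/esym/eqP; rewrite -subr_eq0 -memv0 -(capv_diff G1 G2) memv_cap c'cG2.
by rewrite memvB.
Qed.

Definition css_code : {vspace qstate F m} :=
  <<[seq css_state c | c <- enum (G1 :\: G2)%VS]>>%VS.

Lemma dim_css_code : \dim css_code = (#|F| ^ (\dim G1 - \dim G2))%N.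
Proof.
rewrite /css_code; set s := [seq css_state c | c <- enum _].
have cardD0 : (#|perp G2|%:R : algC) != 0.
  by rewrite pnatr_eq0 -lt0n; apply/card_gt0P; exists 0; rewrite rpred0.
have /eqP -> : free s.
  apply: (orthogonal_free cardD0) => i j; rewrite /s !size_map => iL jL.
  rewrite !(nth_map 0) // qinner_css_state css_complement_diff;
    try by rewrite -mem_enum mem_nth.
  by rewrite nth_uniq ?enum_uniq //; case: (i == j); rewrite ?mul1r ?mul0r.
rewrite /s size_map -cardE card_vspace; congr (_ ^ _)%N.
by have := dimv_cap_compl G1 G2; rewrite (capv_idPr G21) => <-; rewrite addKn.
Qed.

Lemma css_state_knill_laflamme a1 b1 a2 b2 c c' :
    (a2 - a1 \in perp G2 -> a2 - a1 \in perp G1) ->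
    (b2 - b1 \in G1 -> b2 - b1 \in G2) ->
    c \in (G1 :\: G2)%VS -> c' \in (G1 :\: G2)%VS ->
  qinner (pauliXZ chi a1 b1 (css_state c)) (pauliXZ chi a2 b2 (css_state c')) =
  (if (a2 - a1 \in perp G2) && (b2 - b1 \in G2) then chi (- dot (a2 - a1) b2)
   else 0) * qinner (css_state c) (css_state c').
Proof.
move=> aG1 bG2 cL c'L; have c'G1 := subvP (diffvSl G1 G2) _ c'L.
rewrite qinner_pauliXZ_css qinner_css_state.
case: ifP => [/aG1/perpP a_perp | _]; last by rewrite mul0r.
rewrite dotDr (a_perp c' c'G1) addr0; case: (boolP (b2 - b1 \in G2)) => bG2' /=.
  by rewrite rpredDl.
have bG1 : b2 - b1 \notin G1 by apply: contra bG2' => /bG2.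
rewrite mul0r ifN ?mulr0 //; apply: contra bG1 => bcG2.
have cG1 := subvP (diffvSl G1 G2) _ cL.
by rewrite -(addrK (c' - c) (b2 - b1)) memvB ?memvB // (subvP G21).
Qed.

Variables dz dx : nat.
Hypothesis css_dz : forall b, b \in G1 -> b \notin G2 -> (dz <= wt b)%N.
Hypothesis css_dx : forall a, a \in perp G2 -> a \notin perp G1 -> (dx <= wt a)%N.

Lemma css_code_corrects : corrects chi (dz.-1)./2 (dx.-1)./2 css_code.
Proof.
move=> a1 b1 a2 b2 wa1 wb1 wa2 wb2.
have aG1 : a2 - a1 \in perp G2 -> a2 - a1 \in perp G1.
  move=> aG2; apply: contraT => aG1.
  have a0 := wt_bounded_eq0 (css_dx aG2 aG1) (leq_wtB_half wa2 wa1).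
  by move: (aG1); rewrite a0 rpred0.
have bG2 : b2 - b1 \in G1 -> b2 - b1 \in G2.
  move=> bG1; apply: contraT => bG2.
  have b0 := wt_bounded_eq0 (css_dz bG1 bG2) (leq_wtB_half wb2 wb1).
  by move: (bG2); rewrite b0 mem0v.
eexists; apply: qinner_span => i j; rewrite !size_map => iL jL.
by rewrite !(nth_map 0) // css_state_knill_laflamme // -mem_enum mem_nth.
Qed.

Theorem css_AQECC : is_AQECC chi (\dim G1 - \dim G2) dz dx css_code.
Proof. by split; [exact: dim_css_code | exact: css_code_corrects]. Qed.

End CSSConstruction.

Lemma dot_row_mx (F : finFieldType) m1 m2 (x s : 'rV[F]_m1) (y t : 'rV[F]_m2) :
  dot (row_mx x y) (row_mx s t) = dot x s + dot y t.
Proof. by rewrite /dot tr_row_mx mul_row_col mxE. Qed.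

Section PlotkinConstruction.
Variables (F : finFieldType) (n : nat).
Implicit Types A B : {vspace 'rV[F]_n}.

Let dup : 'Hom('rV[F]_n, 'rV[F]_(n + n)) := linfun (mulmxr (row_mx 1%:M 1%:M)).
Let shift : 'Hom('rV[F]_n, 'rV[F]_(n + n)) := linfun (mulmxr (row_mx 0 1%:M)).

Let dupE u : dup u = row_mx u u.
Proof. by rewrite lfunE /= mul_mx_row mulmx1. Qed.

Let shiftE u : shift u = row_mx 0 u.
Proof. by rewrite lfunE /= mul_mx_row mulmx1 mulmx0. Qed.

Definition plotkin A B : {vspace 'rV[F]_(n + n)} := (dup @: A + shift @: B)%VS.

Lemma memv_plotkinP A B w :
  reflect (exists u v, [/\ u \in A, v \in B & w = row_mx u (u + v)])
          (w \in plotkin A B).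
Proof.
apply: (iffP memv_addP) => [[_ /memv_imgP[u uA ->] [_ /memv_imgP[v vB ->] ->]] |].
  by exists u, v; rewrite dupE shiftE add_row_mx addr0.
case=> u [v [uA vB ->]]; exists (dup u); first exact: memv_img.
by exists (shift v); rewrite ?memv_img // dupE shiftE add_row_mx addr0.
Qed.

Lemma plotkinS A B A' B' :
  (A <= A')%VS -> (B <= B')%VS -> (plotkin A B <= plotkin A' B')%VS.
Proof. by move=> AA' BB'; apply: addvS; apply: limgS. Qed.

Lemma dim_plotkin A B : \dim (plotkin A B) = (\dim A + \dim B)%N.
Proof.
have /eqP dup_inj : lker dup == 0%VS.
  by apply/lker0P => u v; rewrite !dupE => /eq_row_mx[].
have /eqP shift_inj : lker shift == 0%VS.
  by apply/lker0P => u v; rewrite !shiftE => /eq_row_mx[].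
rewrite dimv_disjoint_sum ?limg_dim_eq ?dup_inj ?shift_inj ?capv0 //.
apply/eqP; rewrite -subv0; apply/subvP => w; rewrite memv_cap memv0.
case/andP => /memv_imgP[u _ ->] /memv_imgP[v _].
by rewrite dupE shiftE => /eq_row_mx[-> _]; rewrite row_mx0.
Qed.

Lemma plotkin_wt_ge A B w : w \in plotkin A B -> w != 0 ->
  (minn (2 * mindist A) (mindist B) <= wt w)%N.
Proof.
case/memv_plotkinP => u [v [uA vB ->]] w0; rewrite wt_row_mx.
have [v0 | v0] := eqVneq v 0.
  rewrite v0 addr0 in w0 *.
  have u0 : u != 0 by apply: contraNneq w0 => ->; rewrite row_mx0.
  by rewrite geq_min mul2n -addnn leq_add ?min_wt_le.
rewrite geq_min (leq_trans (min_wt_le (P := mem B) vB v0)) ?orbT //.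
by have := leq_wtD (- u) (u + v); rewrite addKr wtN.
Qed.

Lemma perp_plotkin A B s t : row_mx s t \in perp (plotkin A B) ->
  t \in perp B /\ s + t \in perp A.
Proof.
move/perpP => st_perp; have st_uv u v : u \in A -> v \in B -> dot s u + dot t (u + v) = 0.
  by move=> uA vB; rewrite -dot_row_mx st_perp //; apply/memv_plotkinP; exists u, v.
split; apply/perpP => c cV.
  by have := st_uv 0 c (mem0v _) cV; rewrite dot0r !add0r.
by rewrite dotDl; have := st_uv c 0 cV (mem0v _); rewrite addr0.
Qed.

Lemma perp_plotkin_wt_ge A B w : w \in perp (plotkin A B) -> w != 0 ->
  (minn (2 * dual_mindist B) (dual_mindist A) <= wt w)%N.
Proof.
rewrite -[w]hsubmxK; set s := lsubmx w; set t := rsubmx w => /perp_plotkin[tB stA] w0.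
rewrite wt_row_mx; have [st0 | st0] := eqVneq (s + t) 0.
  have s_t : s = - t by apply/eqP; rewrite -addr_eq0 st0.
  have t0 : t != 0 by apply: contraNneq w0 => t0; rewrite s_t t0 oppr0 row_mx0.
  by rewrite s_t wtN geq_min mul2n -addnn leq_add ?min_wt_le ?dual_codeE.
rewrite geq_min (leq_trans (min_wt_le (P := dual_code A) _ st0)) ?orbT ?leq_wtD //.
by rewrite dual_codeE.
Qed.

End PlotkinConstruction.

Unset Implicit Arguments.
Local Close Scope ring_scope.

Theorem theorem9 (F : finFieldType) (chi : F -> algC) (n : nat)
    (C1 C2 C3 C4 : {vspace 'rV[F]_n}) :
  nontriv_add_char chi ->
  (C2 <= C1)%VS -> C2 != C1 ->
  (C4 <= C3)%VS -> C4 != C3 ->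
  exists (Q : {vspace qstate F (2 * n)}) (dz dx : nat),
    [/\ (minn (2 * mindist C1) (mindist C3) <= dz)%N,
        (minn (2 * dual_mindist C4) (dual_mindist C2) <= dx)%N &
        is_AQECC chi ((\dim C1 - \dim C2) + (\dim C3 - \dim C4)) dz dx Q].
Proof.
move=> chiP C21 _ C43 _; rewrite mul2n -addnn.
exists (css_code chi (plotkin C1 C3) (plotkin C2 C4)).
exists (minn (2 * mindist C1) (mindist C3)).
exists (minn (2 * dual_mindist C4) (dual_mindist C2)).
split => //.
have -> : (\dim C1 - \dim C2) + (\dim C3 - \dim C4) =
          \dim (plotkin C1 C3) - \dim (plotkin C2 C4).
  by have := dimvS C21; have := dimvS C43; rewrite !dim_plotkin; lia.
apply: css_AQECC => //; first exact: plotkinS.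
  move=> b bG1 bG2; apply: plotkin_wt_ge bG1 _.
  by apply: contraNneq bG2 => ->; rewrite mem0v.
move=> a aG2 aG1; apply: perp_plotkin_wt_ge aG2 _.
by apply: contraNneq aG1 => ->; rewrite rpred0.
Qed.
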